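(* Let $G$ be a finite abelian group and let $f$ be an automorphism of $\mathcal{P}_{0}(G)$ with pullback $g$. Then for every nonzero $a\in G$ and every $n\in\mathbb{N}$ we have $\operatorname{ord}(a)=\operatorname{ord}(g(a))$ and $g(na)=ng(a)$.
   Context: For an additively written finite abelian group $G$, $\mathcal{P}_{0}(G)$ is the monoid of all subsets of $G$ containing $0$, with setwise addition and identity $\{0\}$. Every automorphism $f$ of $\mathcal{P}_0(G)$ maps $2$-element sets to $2$-element sets; the pullback of $f$ is the bijection $g:G\to G$ defined by $g(0)=0$ and, for nonzero $a\in G$, by $f(\{0,a\})=\{0,g(a)\}$. $\mathbb{N}$ is the set of positive integers. *)

From HB Require Import structures.
From mathcomp Require Import all_boot all_order all_algebra all_fingroup.
Set Implicit Arguments. Unset Strict Implicit. Unset Printing Implicit Defensive.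
Import GRing.Theory.
Local Open Scope ring_scope.

Definition setadd (G : finZmodType) (A B : {set G}) : {set G} :=
  [set a + b | a in A, b in B].

Definition P0 (G : finZmodType) : {pred {set G}} := fun A => 0 \in A.
Arguments P0 : clear implicits.

(* f : {set G} -> {set G} is an automorphism of the monoid P_0(G)
   (the values of f outside P_0(G) are irrelevant): f maps P_0(G) into
   P_0(G), is a bijection of P_0(G), preserves setwise addition and the
   identity {0}. *)
Definition P0_automorphism (G : finZmodType) (f : {set G} -> {set G}) : Prop :=
  [/\ {in P0 G, forall A, f A \in P0 G},
      {in P0 G &, injective f},
      {in P0 G, forall B, exists2 A, A \in P0 G & f A = B},
      {in P0 G &, forall A B, f (setadd A B) = setadd (f A) (f B)}
    & f [set 0] = [set 0]].

Definition pullback (G : finZmodType) (f : {set G} -> {set G}) (g : G -> G) : Prop :=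
  g 0 = 0 /\ forall a : G, a != 0 -> f [set 0; a] = [set 0; g a].

From mathcomp Require Import all_boot all_order all_algebra all_fingroup cyclic.
From mathcomp Require Import zify.
Import GRing.Theory FinRing.Theory.
Set Implicit Arguments.
Unset Strict Implicit.
Local Open Scope ring_scope.

(* Write [multiples x k] for {0, x, ..., k x}, the k-fold sum of {0, x}.  As f
   is additive, f (multiples x k) = multiples (g x) k, and this chain of sets
   stops growing exactly at k = ord x - 1, so g preserves orders.  For
   2 k <= ord x, multiples x (2k-1) = multiples x (k-1) + {0, k x}, and the only
   c with multiples y (k-1) + {0, c} = multiples y (2k-1) is c = k y; hence
   g (k x) = k g(x).  The remaining multiples of x are small multiples of -x,
   so it suffices that g (-x) = - g x.  For m = ord x >= 3 the set
   multiples (-x) (m-3) + {0, x} is <x> minus the point 2 x, whereas for a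
   generator z of a cyclic group, multiples z (m-3) + {0, c} is the whole group
   unless c is 0, z or -z; with z = g (-x) and c = g x, injectivity of f and g
   leaves only g x = - g (-x). *)

Section Multiples.
Variable G : finZmodType.
Implicit Types (x y c t : G) (A B : {set G}).

Lemma mulrn_modn_order x n : x *+ (n %% #[x]%g) = x *+ n.
Proof. by rewrite -!zmodXgE expg_mod_order. Qed.

Lemma mulrn_inj_lt x i j :
  x *+ i = x *+ j -> (i < j + #[x]%g)%N -> (j < i + #[x]%g)%N -> i = j.
Proof.
wlog le_ij : i j / (i <= j)%N.
  by move=> hw Exij; case: (leqP i j) => [|/ltnW] h; [|move=> ? ?; apply/esym]; apply: hw.
move=> /eqP + _ lt_ji; rewrite -!zmodXgE eq_expg_mod_order.
rewrite -(subnKC le_ij) -{1}[i]addn0 eqn_modDl mod0n modn_small; lia.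
Qed.

Lemma opp_mulrn_order_sub x r :
  (r <= #[x]%g)%N -> x *+ r = (- x) *+ (#[x]%g - r).
Proof.
move=> le_r; rewrite mulNrn; apply/eqP; rewrite -addr_eq0 -mulrnDr subnKC //.
by rewrite -zmodXgE expg_order.
Qed.

Lemma oppr_fixed_order x : (- x == x) = (#[x]%g <= 2)%N.
Proof.
rewrite eq_sym -addr_eq0 -mulr2n -zmodXgE -zmod1gE -order_dvdn.
by have := order_gt0 x; case: #[x]%g => [|[|[|m]]].
Qed.

Lemma order_opp x : #[- x]%g = #[x]%g.
Proof. by rewrite -zmodVgE orderV. Qed.

Lemma cycle_opp x : <[- x]>%g = <[x]>%g.
Proof. by rewrite -zmodVgE cycleV. Qed.

Lemma mem0_setadd A B : 0 \in A -> 0 \in B -> 0 \in setadd A B.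
Proof. by move=> A0 B0; apply/imset2P; exists 0 0; rewrite ?addr0. Qed.

Definition multiples x k : {set G} := [set x *+ val i | i : 'I_k.+1].

Lemma multiplesP x k t :
  reflect (exists2 i, (i <= k)%N & t = x *+ i) (t \in multiples x k).
Proof.
apply: (iffP imsetP) => [[i _ ->]|[i le_ik ->]]; first by exists i; rewrite // -ltnS.
by exists (Ordinal (le_ik : (i < k.+1)%N)).
Qed.

Lemma mulrn_mem_multiples x k i : (i <= k)%N -> x *+ i \in multiples x k.
Proof. by move=> le_ik; apply/multiplesP; exists i. Qed.

Lemma mem0_multiples x k : 0 \in multiples x k.
Proof. by rewrite -(mulr0n x) mulrn_mem_multiples. Qed.

Lemma mulrn_notin_multiples x k i :
  (k < i < #[x]%g)%N -> x *+ i \notin multiples x k.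
Proof.
case/andP=> lt_ki lt_im; apply/multiplesP => -[j le_jk /mulrn_inj_lt].
by move=> /(_ ltac:(lia) ltac:(lia)); lia.
Qed.

Lemma multiples0 x : multiples x 0 = [set 0].
Proof.
by apply/setP => t; rewrite inE; apply/multiplesP/eqP => [[[] // _ ->]|->]; exists 0%N.
Qed.

Lemma multiplesS x k : multiples x k.+1 = setadd (multiples x k) [set 0; x].
Proof.
apply/setP => t; apply/multiplesP/imset2P => [[i]|[u v /multiplesP[i le_ik ->]]].
  rewrite leq_eqVlt => /orP[/eqP ->|lt_ik] ->.
    by exists (x *+ k) x; rewrite ?mulrSr ?mulrn_mem_multiples // !inE eqxx orbT.
  by exists (x *+ i) 0; rewrite ?addr0 ?mulrn_mem_multiples // !inE eqxx.
rewrite !inE => /orP[]/eqP -> ->; first by exists i; rewrite ?addr0 // ltnW.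
by exists i.+1; rewrite ?mulrSr.
Qed.

Lemma multiples_stable x k :
  (multiples x k.+1 == multiples x k) = (#[x]%g <= k.+1)%N.
Proof.
apply/eqP/idP => [Ek|le_mk].
  rewrite leqNgt; apply: contraT => /negbNE lt_km.
  have := @mulrn_notin_multiples x k k.+1.
  by rewrite -Ek mulrn_mem_multiples // lt_km leqnn => /(_ isT).
apply/setP => t; apply/multiplesP/multiplesP => [[i _ ->]|[i le_ik ->]].
  exists (i %% #[x]%g)%N; rewrite ?mulrn_modn_order //.
  by rewrite -ltnS (leq_trans _ le_mk) // ltn_mod order_gt0.
by exists i; rewrite // ltnW.
Qed.

Lemma multiples_order x : multiples x (#[x]%g).-1 = <[x]>%g.
Proof.
apply/setP => t; apply/multiplesP/cycleP => [[i _ ->]|[i ->]].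
  by exists i; rewrite zmodXgE.
exists (i %% #[x]%g)%N; rewrite ?zmodXgE ?mulrn_modn_order //.
by rewrite -ltnS prednK ?order_gt0 // ltn_mod order_gt0.
Qed.

Lemma multiples_sub_cycle x k : multiples x k \subset <[x]>%g.
Proof. by apply/subsetP => _ /multiplesP[i _ ->]; rewrite -zmodXgE mem_cycle. Qed.

Lemma multiples_double x p :
  setadd (multiples x p) [set 0; x *+ p.+1] = multiples x p.*2.+1.
Proof.
apply/setP => t; apply/imset2P/multiplesP.
  case=> u v /multiplesP[i le_ip ->]; rewrite !inE => /orP[]/eqP -> ->.
    by exists i; rewrite ?addr0 //; lia.
  by exists (i + p.+1)%N; rewrite ?mulrnDr //; lia.
case=> k le_k ->; have [le_kp|lt_pk] := leqP k p.
  by exists (x *+ k) 0; rewrite ?addr0 ?mulrn_mem_multiples // !inE eqxx.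
exists (x *+ (k - p.+1)) (x *+ p.+1); rewrite ?inE ?eqxx ?orbT.
- by apply: mulrn_mem_multiples; lia.
- by [].
- by rewrite -mulrnDr subnK.
Qed.

Lemma multiples_double_uniq y c p :
  (p.+1.*2 <= #[y]%g)%N ->
  setadd (multiples y p) [set 0; c] = multiples y p.*2.+1 -> c = y *+ p.+1.
Proof.
move=> le_m E.
have [j le_j Ec] : exists2 j, (j <= p.*2.+1)%N & c = y *+ j.
  apply/multiplesP; rewrite -E; apply/imset2P.
  by exists 0 c; rewrite ?mem0_multiples ?add0r // !inE eqxx orbT.
rewrite {}Ec in E *.
have decomp i : (p < i <= p.*2.+1)%N -> exists2 k, (k <= p)%N & i = (k + j)%N.
  case/andP=> lt_pi le_i; have := mulrn_mem_multiples y le_i.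
  rewrite -E => /imset2P[u v /multiplesP[k le_kp ->]].
  rewrite !inE => /orP[]/eqP -> /esym; rewrite ?addr0 -?mulrnDr => /mulrn_inj_lt.
    by move=> /(_ ltac:(lia) ltac:(lia)); lia.
  by move=> /(_ ltac:(lia) ltac:(lia)) <-; exists k.
have [k1 le_k1 E1] := decomp p.*2.+1 ltac:(lia).
have [k2 le_k2 E2] := decomp p.+1 ltac:(lia).
by congr (_ *+ _); lia.
Qed.

Lemma cycle_minus_multiples y t : (3 <= #[y]%g)%N ->
  t \in <[y]>%g -> t \notin multiples y (#[y]%g - 3) ->
  t = y *+ (#[y]%g - 2) \/ t = y *+ (#[y]%g - 2) + y.
Proof.
move=> ge3; rewrite -multiples_order => /multiplesP[i le_i ->] t_out.
have [le_i3|lt3i] := leqP i (#[y]%g - 3); first by rewrite mulrn_mem_multiples in t_out.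
have [-> | ->] : i = (#[y]%g - 2)%N \/ i = (#[y]%g - 2).+1 by lia.
  by left.
by right; rewrite mulrSr.
Qed.

Lemma setadd_multiples_pair_cycle y c : (3 <= #[y]%g)%N ->
  c \in <[y]>%g -> c \notin [set 0; y; - y] ->
  setadd (multiples y (#[y]%g - 3)) [set 0; c] = <[y]>%g.
Proof.
move=> ge3 c_y c_out; apply/eqP; rewrite eqEsubset; apply/andP; split.
  apply/subsetP => _ /imset2P[u v u_in v_in ->]; rewrite -zmodMgE groupM //.
    exact: subsetP (multiples_sub_cycle _ _) _ u_in.
  by move: v_in; rewrite !inE => /orP[]/eqP ->; rewrite // -zmod1gE group1.
apply/subsetP => t t_y.
have [t_in|t_out] := boolP (t \in multiples y (#[y]%g - 3)).
  by apply/imset2P; exists t 0; rewrite ?addr0 // !inE eqxx.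
have [tc_in|tc_out] := boolP (t - c \in multiples y (#[y]%g - 3)).
  by apply/imset2P; exists (t - c) c; rewrite ?subrK // !inE eqxx orbT.
have tc_y : t - c \in <[y]>%g by rewrite -zmodVgE -zmodMgE groupM ?groupV.
suff : c \in [set 0; y; - y] by rewrite (negPf c_out).
have -> : c = t - (t - c) by rewrite opprB addrC subrK.
set a := y *+ (#[y]%g - 2).
have [Et|Et] := cycle_minus_multiples ge3 t_y t_out;
  have [->|->] := cycle_minus_multiples ge3 tc_y tc_out; rewrite Et !inE.
- by rewrite subrr eqxx.
- by rewrite opprD addrA subrr add0r eqxx !orbT.
- by rewrite [a + y]addrC addrK eqxx orbT.
- by rewrite subrr eqxx.
Qed.

Lemma setadd_multiples_opp_cycle u : (3 <= #[u]%g)%N ->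
  setadd (multiples u (#[u]%g - 3)) [set 0; - u] != <[u]>%g.
Proof.
move=> ge3; apply/eqP => E.
have : u *+ (#[u]%g - 2) \in <[u]>%g by rewrite -zmodXgE mem_cycle.
rewrite -E => /imset2P[_ v /multiplesP[i le_i ->]].
rewrite !inE => /orP[]/eqP -> => [|/(congr1 (+%R^~ u))].
  by rewrite addr0 => /mulrn_inj_lt; lia.
by rewrite subrK -mulrSr => /mulrn_inj_lt; lia.
Qed.
End Multiples.

Section Pullback.
Variables (G : finZmodType) (f : {set G} -> {set G}) (g : G -> G).
Hypotheses (f_aut : P0_automorphism f) (g_pull : pullback f g).
Implicit Types x y : G.

Lemma P0_injective (A B : {set G}) : 0 \in A -> 0 \in B -> f A = f B -> A = B.
Proof. by case: f_aut => _ f_inj _ _ _; apply: f_inj. Qed.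

Lemma P0_setadd (A B : {set G}) :
  0 \in A -> 0 \in B -> f (setadd A B) = setadd (f A) (f B).
Proof. by case: f_aut => _ _ _ f_add _; apply: f_add. Qed.

Lemma pullback0 : g 0 = 0.
Proof. by case: g_pull. Qed.

Lemma f_pair x : f [set 0; x] = [set 0; g x].
Proof.
case: g_pull => g0 f_pair_nz; have [->|/f_pair_nz //] := eqVneq x 0.
by rewrite g0 setUid; case: f_aut.
Qed.

Lemma pullback_inj : injective g.
Proof.
move=> x y gxy; have /setP E : [set 0; x] = [set 0; y].
  by apply: P0_injective; rewrite ?inE ?eqxx // !f_pair gxy.
move: (E x) (E y); rewrite !inE !eqxx !orbT /=.
by move=> /esym/orP[]/eqP-> /orP[]/eqP.
Qed.

Lemma f_multiples x k : f (multiples x k) = multiples (g x) k.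
Proof.
elim: k => [|k IHk]; first by rewrite !multiples0; case: f_aut.
by rewrite !multiplesS P0_setadd ?mem0_multiples ?inE ?eqxx // IHk f_pair.
Qed.

Lemma order_pullback x : #[g x]%g = #[x]%g.
Proof.
have stable k : (#[g x]%g <= k.+1)%N = (#[x]%g <= k.+1)%N.
  rewrite -!multiples_stable -!f_multiples.
  apply/eqP/eqP => [E|->] //.
  by apply: P0_injective E; apply: mem0_multiples.
have := stable (#[x]%g).-1; have := stable (#[g x]%g).-1.
rewrite !prednK ?order_gt0 // !leqnn => le_x_gx le_gx_x.
by apply/eqP; rewrite eqn_leq -le_x_gx le_gx_x.
Qed.

Lemma f_cycle x : f <[x]>%g = <[g x]>%g.
Proof. by rewrite -!multiples_order f_multiples order_pullback. Qed.

Lemma pullback_mulrn_half x k : (k.*2 <= #[x]%g)%N -> g (x *+ k) = g x *+ k.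
Proof.
case: k => [|p le_m]; first by rewrite !mulr0n pullback0.
apply: multiples_double_uniq; first by rewrite order_pullback.
rewrite -f_pair -f_multiples -P0_setadd ?mem0_multiples ?inE ?eqxx //.
by rewrite multiples_double f_multiples.
Qed.

Lemma pullback_opp x : g (- x) = - g x.
Proof.
have [le_m2|gt_m2] := leqP #[x]%g 2.
  have /eqP-> : - x == x by rewrite oppr_fixed_order.
  by apply/esym/eqP; rewrite oppr_fixed_order order_pullback.
set y := g x; set z := g (- x).
have oz : #[z]%g = #[x]%g by rewrite order_pullback order_opp.
suff : y \in [set 0; z; - z].
  rewrite !inE => /orP[/orP[/eqP y0|/eqP yz]|/eqP->]; last by rewrite opprK.
    by move: gt_m2; rewrite -pullback0 in y0; rewrite (pullback_inj y0) order1.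
  by move: gt_m2; rewrite ltnNge -oppr_fixed_order -(pullback_inj yz) eqxx.
apply: contraT => y_out.
pose T := setadd (multiples (- x) (#[x]%g - 3)) [set 0; x].
have fT : f T = f <[- x]>%g.
  rewrite f_cycle P0_setadd ?mem0_multiples ?inE ?eqxx // f_multiples f_pair.
  rewrite -oz setadd_multiples_pair_cycle ?oz //.
  by rewrite -/z -f_cycle cycle_opp f_cycle cycle_id.
have := @setadd_multiples_opp_cycle _ (- x).
rewrite order_opp opprK => /(_ gt_m2) /eqP[].
apply: P0_injective fT; last exact: group1.
by rewrite mem0_setadd ?mem0_multiples // !inE eqxx.
Qed.

Lemma pullback_mulrn x n : g (x *+ n) = g x *+ n.
Proof.
rewrite -mulrn_modn_order -[RHS]mulrn_modn_order order_pullback.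
set r := (n %% #[x]%g)%N.
have lt_r : (r < #[x]%g)%N by rewrite ltn_mod order_gt0.
have [le_half|gt_half] := leqP r.*2 #[x]%g; first exact: pullback_mulrn_half.
have le_compl : ((#[x]%g - r).*2 <= #[- x]%g)%N by rewrite order_opp; lia.
rewrite (opp_mulrn_order_sub (ltnW lt_r)) pullback_mulrn_half // pullback_opp.
have le_r : (r <= #[g x]%g)%N by rewrite order_pullback ltnW.
by rewrite (opp_mulrn_order_sub le_r) order_pullback.
Qed.
End Pullback.

Theorem lemma2p5 (G : finZmodType) (f : {set G} -> {set G}) (g : G -> G) :
  P0_automorphism f -> pullback f g ->
  forall a : G, a != 0 ->
    #[a]%g = #[g a]%g /\ (forall n : nat, (0 < n)%N -> g (a *+ n) = (g a) *+ n).
Proof.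
move=> f_aut g_pull a _; split; first by rewrite (order_pullback f_aut g_pull).
by move=> n _; rewrite (pullback_mulrn f_aut g_pull).
Qed.
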